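(* For every integer $n \geq 3$, the chromatic number of the Kneser graph of triangulations of a convex $n$-gon satisfies \[\chi(\mathrm{KG}(\mathcal{T}_n)) = n-2.\]
   Context: Label the vertices of a convex $n$-gon by $1,2,\dots,n$ in cyclic order. Let $\mathrm{Diag}_n = \{\{i,j\} \subseteq [n] : i-j \not\equiv \pm 1 \pmod n\}$ be the set of diagonals. Two diagonals cross if they meet in the interior of the polygon (equivalently, their endpoints are four distinct labels that interleave in the cyclic order). A triangulation is identified with the set of its diagonals (a maximal set of pairwise noncrossing diagonals, of size $n-3$), and $\mathcal{T}_n$ denotes the set of all triangulations. For a finite set system $\mathcal{F}$, the Kneser graph $\mathrm{KG}(\mathcal{F})$ has vertex set $\mathcal{F}$, with $F, F'$ adjacent iff $F \cap F' = \emptyset$. Thus two triangulations are adjacent iff they share no diagonal. *)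

From mathcomp Require Import all_boot.
Set Implicit Arguments. Unset Strict Implicit. Unset Printing Implicit Defensive.

(* Vertices of the convex n-gon are labelled 0,...,n-1 (type 'I_n) in cyclic order. *)

Definition cyc_adj (n : nat) (i j : 'I_n) : bool :=
  (i.+1 %% n == j %% n) || (j.+1 %% n == i %% n).

Definition is_diag (n : nat) (d : {set 'I_n}) : bool :=
  (#|d| == 2) && [forall i in d, forall j in d, (i != j) ==> ~~ cyc_adj i j].

(* Two diagonals cross: their endpoints are four distinct labels that
   interleave in the cyclic order: with d1 = {a,b}, a < b, exactly one
   endpoint of d2 lies strictly between a and b. *)
Definition crossing (n : nat) (d1 d2 : {set 'I_n}) : bool :=
  [disjoint d1 & d2] &&
  [exists a in d1, exists b in d1,
     (a < b) && (#|[set x in d2 | (a < x) && (x < b)]| == 1)].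

Definition is_triangulation (n : nat) (T : {set {set 'I_n}}) : Prop :=
  (forall d, d \in T -> is_diag d) /\
  (forall d e, d \in T -> e \in T -> ~~ crossing d e) /\
  (forall d, is_diag d -> d \notin T -> exists2 e, e \in T & crossing d e).

Definition kneser_triang_colorable (n k : nat) : Prop :=
  exists f : {set {set 'I_n}} -> nat,
    (forall T, is_triangulation T -> f T < k) /\
    (forall T T', is_triangulation T -> is_triangulation T' -> T != T' ->
        [disjoint T & T'] -> f T != f T').

Definition kneser_triang_chromatic_number (n c : nat) : Prop :=
  kneser_triang_colorable n c /\ (forall k, kneser_triang_colorable n k -> c <= k).

From mathcomp Require Import all_boot zify.
Set Implicit Arguments. Unset Strict Implicit. Unset Printing Implicit Defensive.

(* Colour a triangulation by the apex v of its triangle on the side {0, n-1}.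
   Then 1 <= v <= n-2, and two triangulations with the same apex v share the
   diagonal {0, v} if v >= 2, or {1, n-1} if v = 1 (and n >= 4); this is a
   proper (n-2)-colouring.

   For the lower bound, prove by induction on m the stronger claim that
   m-2 colours are needed even if only disjoint triangulations with distinct
   apices must receive distinct colours. A triangulation S of the m-gon
   0..m-1 extends to the (m+1)-gon 0..m by adding {0, m-1} (new apex m-1) or
   {apex S, m} (apex unchanged); the fan at m has apex 1 and is disjoint from
   every extension of the first kind. Colouring S by its second extension,
   or by its first one when the second one has the colour of the fan, gives a
   colouring of the m-gon with the same property that avoids the colour of
   the fan, so k-1 colours suffice for the m-gon. *)

Lemma forall_in_set2 (T : finType) (x y : T) (P : pred T) :
  [forall i in [set x; y], P i] = P x && P y.
Proof.
apply/forallP/andP => [H|[Hx Hy] i].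
  by split; [move: (H x) | move: (H y)]; rewrite !inE eqxx ?orbT.
by apply/implyP; rewrite !inE => /orP [] /eqP ->.
Qed.

Lemma card_sep_set2 (T : finType) (p q : T) (P : pred T) : p != q ->
  #|[set x in [set p; q] | P x]| = P p + P q.
Proof.
move=> pq; rewrite setIdE setIUl cardsU.
have card1 r : #|[set r] :&: [set x | P x]| = P r.
  by case Pr: (P r); [rewrite (setIidPl _) ?cards1 // sub1set inE Pr
                     | rewrite (_ : _ :&: _ = set0) ?cards0 //; apply/setP => z;
                       rewrite !inE; case: eqP => // ->; rewrite Pr].
rewrite !card1 (_ : _ :&: _ = set0) ?cards0 ?subn0 //.
by apply/setP => z; rewrite !inE; case: eqP => // ->; rewrite (negbTE pq) andbF.
Qed.

Lemma disjointP (T : finType) (A B : {set T}) :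
  reflect (forall x, x \in A -> x \in B -> False) [disjoint A & B].
Proof.
rewrite disjoint_subset; apply: (iffP subsetP) => H x xA.
  by move=> xB; move: (H x xA); rewrite inE xB.
by rewrite inE; apply/negP => /(H x xA).
Qed.

Lemma ord_ltn_neq n (x y : 'I_n) : x < y -> x != y.
Proof. by move=> h; rewrite -val_eqE /= neq_ltn h. Qed.

Lemma card2_set2_ltn n (d : {set 'I_n}) :
  #|d| == 2 -> exists x y : 'I_n, x < y /\ d = [set x; y].
Proof.
case/cards2P => x [y [xy ->]].
case: (ltngtP x y) => h; first by exists x, y.
  by exists y, x; rewrite setUC.
by move: xy; rewrite -val_eqE /= h eqxx.
Qed.

Lemma crossing_set2 n (a b p q : 'I_n) : a < b -> p < q ->
  crossing [set a; b] [set p; q] =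
  ((a < p < b) && (b < q)) || ((p < a) && (a < q < b)).
Proof.
move=> ab pq; rewrite /crossing.
have -> : [disjoint [set a; b] & [set p; q]] = [&& a != p, a != q, b != p & b != q].
  apply/disjointP/and4P.
    move=> H; split; apply/eqP => E;
      [apply: (H a) | apply: (H a) | apply: (H b) | apply: (H b)];
      by rewrite !inE ?E eqxx ?orbT.
  case=> ap aq bp bq x; rewrite !inE => /orP[]/eqP-> /orP[]/eqP E;
    [move: ap | move: aq | move: bp | move: bq]; by rewrite E eqxx.
have -> : [exists a' in [set a; b], exists b' in [set a; b],
     (a' < b') && (#|[set x in [set p; q] | (a' < x) && (x < b')]| == 1)] =
   ((a < p < b) + (a < q < b) == 1).
  apply/existsP/idP.
    case=> a'; rewrite !inE => /andP[] /orP[]/eqP-> /existsP[b'];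
      rewrite !inE => /andP[] /orP[]/eqP-> /andP[lt];
      rewrite card_sep_set2 ?ord_ltn_neq //; lia.
  move=> H; exists a; rewrite !inE eqxx /=; apply/existsP; exists b.
  by rewrite !inE eqxx orbT ab card_sep_set2 ?ord_ltn_neq.
rewrite -!val_eqE /=; lia.
Qed.

Section Polygon.

Variable N : nat.
Implicit Types (m : nat) (d : {set 'I_N.+1}) (S T : {set {set 'I_N.+1}}).

(* The m-gon on the vertices 0..m-1, for any m <= N+1, lives inside 'I_N.+1,
   so that the induction on m stays on a single type. *)

Definition cyc_adjn m (i j : nat) : bool :=
  (i.+1 %% m == j %% m) || (j.+1 %% m == i %% m).

Definition diag_in m d : bool :=
  [&& #|d| == 2, [forall i in d, forall j in d, (i != j) ==> ~~ cyc_adjn m i j]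
    & [forall i in d, i < m]].

Definition triangulation_in m T : Prop :=
  (forall d, d \in T -> diag_in m d) /\
  (forall d e, d \in T -> e \in T -> ~~ crossing d e) /\
  (forall d, diag_in m d -> d \notin T -> exists2 e, e \in T & crossing d e).

Lemma cyc_adjnE m (x y : nat) : x < y -> y < m ->
  cyc_adjn m x y = (x.+1 == y) || ((x == 0) && (y.+1 == m)).
Proof.
move=> xy ym; rewrite /cyc_adjn (@modn_small x) ?(@modn_small y) ?(@modn_small x.+1); try lia.
case: (ltngtP y.+1 m) => h; [rewrite modn_small // | lia | ].
  by case: (x.+1 == y) => //=; lia.
by rewrite h modnn; case: (x.+1 == y) => //=; lia.
Qed.

Lemma cyc_adjnC m : symmetric (cyc_adjn m).
Proof. by move=> x y; rewrite /cyc_adjn orbC. Qed.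

Lemma diag_in_set2 m (x y : 'I_N.+1) : x < y ->
  diag_in m [set x; y] = [&& y < m, x.+1 < y & ~~ ((x == 0 :> nat) && (y.+1 == m))].
Proof.
move=> xy; rewrite /diag_in cards2 ord_ltn_neq //= !forall_in_set2 !eqxx /=.
rewrite (ord_ltn_neq xy) eq_sym (ord_ltn_neq xy) /= (cyc_adjnC m y x) !andbT andbb.
case: (ltnP y m) => ym; last by rewrite !andbF.
rewrite (cyc_adjnE xy ym) (_ : x < m); last by lia.
by rewrite /= !andbT negb_or; congr (_ && _); lia.
Qed.

Lemma diag_in_endpoints m d : diag_in m d ->
  exists x y : 'I_N.+1, [/\ x < y, d = [set x; y], y < m, x.+1 < y &
     ~~ ((x == 0 :> nat) && (y.+1 == m))].
Proof.
move=> dm; case/and3P: (dm) => d2 _ _; have [x [y [xy E]]] := card2_set2_ltn d2.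
by move: dm; rewrite E diag_in_set2 // => /and3P[*]; exists x, y; split.
Qed.

Lemma diag_in_ltn m d x : diag_in m d -> x \in d -> x < m.
Proof. by case/and3P => _ _ /forallP/(_ x)/implyP. Qed.

Lemma diag_inS m d : diag_in m d -> diag_in m.+1 d.
Proof.
case/diag_in_endpoints => x [y [xy -> ? ? ?]].
by rewrite diag_in_set2 //; apply/and3P; split; lia.
Qed.

Lemma diag_in_full d : diag_in N.+1 d = is_diag d.
Proof.
rewrite /diag_in /is_diag.
have -> : [forall i in d, i < N.+1] by apply/forallP => i; apply/implyP => _.
by rewrite andbT.
Qed.

Lemma triangulation_in_full T : triangulation_in N.+1 T <-> is_triangulation T.
Proof.
split; case=> [H1 [H2 H3]].
  split; [by move=> d /H1; rewrite diag_in_full | split => // d].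
  by rewrite -diag_in_full; apply: H3.
split; [by move=> d /H1; rewrite -diag_in_full | split => // d].
by rewrite diag_in_full; apply: H3.
Qed.

Lemma triangulation_in3 T : triangulation_in 3 T <-> T = set0.
Proof.
have nodiag d : ~~ diag_in 3 d by apply/negP => /diag_in_endpoints[x [y [? ? ? ? ?]]]; lia.
split=> [[H1 _] | ->].
  by apply/setP => d; rewrite inE; apply/negP => /H1; rewrite (negbTE (nodiag d)).
split; [by move=> d; rewrite inE | split; first by move=> d e; rewrite inE].
by move=> d; rewrite (negbTE (nodiag d)).
Qed.

(* The apex of the triangle on the side {0, m-1} is the largest neighbour of 0
   in T, or 1 when no diagonal of T ends at 0. *)
Definition apex T : nat :=
  \max_(x : 'I_N.+1 | (x == 1 :> nat) || ([set ord0; x] \in T)) x.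

Lemma leq_apex T (x : 'I_N.+1) : [set ord0; x] \in T -> x <= apex T.
Proof. by move=> h; apply: leq_bigmax_cond; rewrite h orbT. Qed.

Hypothesis N_gt0 : 0 < N.

Lemma apex_gt0 T : 0 < apex T.
Proof. by apply: (@bigmax_sup _ (inord 1)); rewrite inordK //; lia. Qed.

Lemma apex_spec T :
  exists2 x : 'I_N.+1, nat_of_ord x = apex T & (x == 1 :> nat) || ([set ord0; x] \in T).
Proof.
have [|x Px E] := @eq_bigmax_cond _ (fun x : 'I_N.+1 => (x == 1 :> nat) || ([set ord0; x] \in T)) val.
  by apply/card_gt0P; exists (inord 1); rewrite /in_mem /= inordK //; lia.
by exists x; first exact/esym/E.
Qed.

Lemma eq_apex T T' :
  (forall x : 'I_N.+1, ([set ord0; x] \in T) = ([set ord0; x] \in T')) -> apex T = apex T'.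
Proof. by move=> H; apply: eq_bigl => x; rewrite H. Qed.

Lemma apex_uncrossed m T (p q : 'I_N.+1) :
  triangulation_in m T -> [set p; q] \in T -> p < q -> ~~ (p < apex T < q).
Proof.
move=> [_ [Hc _]] pqT pq; apply/negP => /andP[l1 l2].
have [x xv /orP[x1|x0T]] := apex_spec T.
  have p0 : p = ord0 by apply: val_inj => /=; lia.
  by move: pqT; rewrite p0 => /leq_apex; lia.
case: (posnP p) => p0.
  have p0' : p = ord0 by apply: val_inj.
  by move: pqT; rewrite p0' => /leq_apex; lia.
have := Hc _ _ x0T pqT; rewrite crossing_set2 /=; [|lia|lia].
by rewrite p0 xv l1 l2.
Qed.

Lemma apex_leq m T : 3 <= m -> triangulation_in m T -> apex T <= m - 2.
Proof.
move=> m3 [Hd _]; have [x xv /orP[x1|x0T]] := apex_spec T; first lia.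
have [a [b [ab E ? ? ?]]] := diag_in_endpoints (Hd _ x0T).
have : (ord0 : 'I_N.+1) \in [set a; b] by rewrite -E !inE eqxx.
have : x \in [set a; b] by rewrite -E !inE eqxx orbT.
by rewrite !inE -!val_eqE /=; lia.
Qed.

Lemma apex_diag_mem T (v : 'I_N.+1) :
  nat_of_ord v = apex T -> 2 <= apex T -> [set ord0; v] \in T.
Proof.
move=> vv a2; have [x xv /orP[x1|x0T]] := apex_spec T; first lia.
by have -> : v = x by apply: val_inj => /=; lia.
Qed.

(* {apex, m-1} is an edge of the apex triangle {0, apex, m-1}, and a diagonal
   unless apex = m-2. *)
Lemma apex_last_diag_mem m T (v w : 'I_N.+1) : triangulation_in m T ->
  nat_of_ord v = apex T -> nat_of_ord w = m.-1 -> apex T + 2 < m -> [set v; w] \in T.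
Proof.
move=> tT vv ww am; have a1 := apex_gt0 T.
case: (boolP ([set v; w] \in T)) => // nin.
have vw : v < w by lia.
have dvw : diag_in m [set v; w] by rewrite diag_in_set2 //; apply/and3P; split; lia.
have [Hd [_ Hm]] := tT.
have [e eT] := Hm _ dvw nin.
have [p [q [pq E ? ? ?]]] := diag_in_endpoints (Hd _ eT).
have pqT : [set p; q] \in T by rewrite -E.
by rewrite E crossing_set2 //; have := apex_uncrossed tT pqT pq; lia.
Qed.

Lemma apex_shared_diag m T T' : 4 <= m -> m <= N.+1 ->
  triangulation_in m T -> triangulation_in m T' -> apex T = apex T' ->
  ~~ [disjoint T & T'].
Proof.
move=> m4 mN tT tT' eqa; apply/negP => /disjointP disj.
have al := apex_leq (ltnW m4) tT.
case: (leqP 2 (apex T)) => a2.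
  pose v : 'I_N.+1 := inord (apex T).
  have vv : nat_of_ord v = apex T by rewrite inordK; lia.
  by apply: (disj [set ord0; v]); apply: apex_diag_mem; lia.
pose v : 'I_N.+1 := inord (apex T); pose w : 'I_N.+1 := inord m.-1.
have vv : nat_of_ord v = apex T by rewrite inordK; lia.
have ww : nat_of_ord w = m.-1 by rewrite inordK; lia.
by apply: (disj [set v; w]); [apply: (apex_last_diag_mem tT) | apply: (apex_last_diag_mem tT')]; lia.
Qed.

Lemma kneser_triang_colorable_apex : 2 <= N -> kneser_triang_colorable N.+1 (N.+1 - 2).
Proof.
move=> N2; exists (fun T => (apex T).-1); split.
  move=> T /triangulation_in_full tT.
  by have := apex_leq (_ : 3 <= N.+1) tT; have := apex_gt0 T; lia.
move=> T T' /triangulation_in_full tT /triangulation_in_full tT' neq disj.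
apply/negP => /eqP eqc.
have eqa : apex T = apex T' by have := apex_gt0 T; have := apex_gt0 T'; lia.
case: (ltngtP N 2) => [|N3|N2']; first lia.
  by move: disj; apply/negP; apply: (apex_shared_diag _ _ tT tT').
have n3 : N.+1 = 3 by rewrite N2'.
move: tT tT'; rewrite n3 => /triangulation_in3 T0 /triangulation_in3 T'0.
by move: neq; rewrite T0 T'0 eqxx.
Qed.

Section Extension.

Variable m : nat.
Hypotheses (m_ge3 : 3 <= m) (m_leN : m <= N).

Definition extend_side S := S :|: [set [set ord0; (inord m.-1 : 'I_N.+1)]].

Definition extend_apex S :=
  S :|: [set [set (inord (apex S) : 'I_N.+1); (inord m : 'I_N.+1)]].

Definition fan : {set {set 'I_N.+1}} :=
  [set d | [exists j : 'I_N.+1, [&& 1 <= j, j.+2 <= m & d == [set j; (inord m : 'I_N.+1)]]]].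

Lemma triangulation_extend_side S :
  triangulation_in m S -> triangulation_in m.+1 (extend_side S).
Proof.
move=> [Hd [Hc Hm]]; rewrite /extend_side; set o1 : 'I_N.+1 := inord m.-1.
have o1v : nat_of_ord o1 = m.-1 by rewrite inordK; lia.
have o1lt : (ord0 : 'I_N.+1) < o1 by rewrite /= o1v; lia.
split; [|split].
- move=> d; rewrite !inE => /orP[/Hd/diag_inS // | /eqP ->].
  by rewrite diag_in_set2 //=; apply/and3P; split; lia.
- move=> d e; rewrite !inE => /orP[dS|/eqP->] /orP[eS|/eqP->].
  + exact: Hc.
  + have [a [b [ab -> ? ? ?]]] := diag_in_endpoints (Hd _ dS).
    by rewrite crossing_set2 //=; lia.
  + have [a [b [ab -> ? ? ?]]] := diag_in_endpoints (Hd _ eS).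
    by rewrite crossing_set2 //=; lia.
  + by rewrite crossing_set2 //=; lia.
- move=> d dd; rewrite inE negb_or => /andP[dS dn].
  have [x [y [xy E ym x1 nn]]] := diag_in_endpoints dd.
  case: (ltngtP y m) => [ylt||yeq]; [|lia|].
  + case: (boolP ((x == 0 :> nat) && (y == m.-1 :> nat))) => h.
      move: dn; rewrite inE E.
      have -> : x = ord0 by apply: val_inj => /=; lia.
      have -> : y = o1 by apply: val_inj => /=; lia.
      by rewrite eqxx.
    have dm : diag_in m d by rewrite E diag_in_set2 //; apply/and3P; split; lia.
    have [e eS cr] := Hm _ dm dS.
    by exists e => //; rewrite inE eS.
  + exists [set ord0; o1]; first by rewrite !inE eqxx orbT.
    by rewrite E crossing_set2 //=; lia.
Qed.

Lemma apex_extend_side S : triangulation_in m S -> apex (extend_side S) = m.-1.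
Proof.
move=> tS.
have := apex_leq (_ : 3 <= m.+1) (triangulation_extend_side tS).
have : (inord m.-1 : 'I_N.+1) <= apex (extend_side S).
  by apply: leq_apex; rewrite !inE eqxx orbT.
by rewrite inordK; lia.
Qed.

Lemma triangulation_extend_apex S :
  triangulation_in m S -> triangulation_in m.+1 (extend_apex S).
Proof.
move=> tS; have [Hd [Hc Hm]] := tS.
have a1 := apex_gt0 S; have al := apex_leq m_ge3 tS.
rewrite /extend_apex; set vo : 'I_N.+1 := inord (apex S); set om : 'I_N.+1 := inord m.
have vv : nat_of_ord vo = apex S by rewrite inordK; lia.
have omv : nat_of_ord om = m by rewrite inordK; lia.
have vom : vo < om by rewrite vv omv; lia.
split; [|split].
- move=> d; rewrite !inE => /orP[/Hd/diag_inS // | /eqP ->].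
  by rewrite diag_in_set2 //=; apply/and3P; split; lia.
- move=> d e; rewrite !inE => /orP[dS|/eqP->] /orP[eS|/eqP->].
  + exact: Hc.
  + have [a [b [ab E ? ? ?]]] := diag_in_endpoints (Hd _ dS).
    have := apex_uncrossed tS (_ : [set a; b] \in S) ab; rewrite -E => /(_ dS).
    by rewrite E crossing_set2 //=; lia.
  + have [a [b [ab E ? ? ?]]] := diag_in_endpoints (Hd _ eS).
    have := apex_uncrossed tS (_ : [set a; b] \in S) ab; rewrite -E => /(_ eS).
    by rewrite E crossing_set2 //=; lia.
  + by rewrite crossing_set2 //=; lia.
- move=> d dd; rewrite !inE negb_or => /andP[dS dn].
  have [x [y [xy E ym x1 nn]]] := diag_in_endpoints dd.
  case: (ltngtP y m) => [ylt||yeq]; [|lia|].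
  + case: (boolP ((x == 0 :> nat) && (y == m.-1 :> nat))) => h.
      exists [set vo; om]; first by rewrite !inE eqxx orbT.
      by rewrite E crossing_set2 //=; lia.
    have dm : diag_in m d by rewrite E diag_in_set2 //; apply/and3P; split; lia.
    have [e eS cr] := Hm _ dm dS.
    by exists e => //; rewrite inE eS.
  + have xv : nat_of_ord x != apex S.
      apply/negP => /eqP xv; move: dn; rewrite E.
      have -> : x = vo by apply: val_inj => /=; lia.
      have -> : y = om by apply: val_inj => /=; lia.
      by rewrite eqxx.
    case: (ltnP x (apex S)) => xa.
      exists [set ord0; vo]; first by rewrite inE apex_diag_mem //; lia.
      by rewrite E crossing_set2 //=; lia.
    pose w : 'I_N.+1 := inord m.-1.
    have wv : nat_of_ord w = m.-1 by rewrite inordK; lia.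
    exists [set vo; w]; first by rewrite inE (apex_last_diag_mem tS vv wv) //; lia.
    by rewrite E crossing_set2 //=; lia.
Qed.

Lemma apex_extend_apex S : triangulation_in m S -> apex (extend_apex S) = apex S.
Proof.
move=> tS; have a1 := apex_gt0 S; have al := apex_leq m_ge3 tS.
apply: eq_apex => x; rewrite /extend_apex !inE; case: eqP => [E|_]; last by rewrite orbF.
have : (inord m : 'I_N.+1) \in [set ord0; x] by rewrite E !inE eqxx orbT.
have : (inord (apex S) : 'I_N.+1) \in [set ord0; x] by rewrite E !inE eqxx.
by rewrite !inE -!val_eqE /= !inordK; lia.
Qed.

Lemma triangulation_fan : triangulation_in m.+1 fan.
Proof.
rewrite /fan; set om : 'I_N.+1 := inord m.
have omv : nat_of_ord om = m by rewrite inordK; lia.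
split; [|split].
- move=> d; rewrite inE => /existsP[j /and3P[j1 j2 /eqP->]].
  by rewrite diag_in_set2 ?omv //=; [apply/and3P; split; lia | lia].
- move=> d e; rewrite !inE => /existsP[j /and3P[j1 j2 /eqP->]]
     /existsP[j' /and3P[j1' j2' /eqP->]].
  by rewrite crossing_set2 ?omv //; lia.
- move=> d dd; rewrite inE => dn.
  have [x [y [xy E ym x1 nn]]] := diag_in_endpoints dd.
  case: (ltngtP y m) => [ylt||yeq]; [|lia|].
  + pose j : 'I_N.+1 := inord x.+1.
    have jv : nat_of_ord j = x.+1 by rewrite inordK; lia.
    exists [set j; om].
      by rewrite inE; apply/existsP; exists j; rewrite jv eqxx andbT; apply/andP; split; lia.
    by rewrite E crossing_set2 ?jv ?omv //=; lia.
  + case/negP: dn; apply/existsP; exists x; rewrite E.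
    have -> : y = om by apply: val_inj => /=; lia.
    by rewrite eqxx andbT; apply/andP; split; lia.
Qed.

Lemma apex_fan : apex fan = 1.
Proof.
have : apex fan <= 1; last by have := apex_gt0 fan; lia.
apply/bigmax_leqP => x /orP[/eqP-> //|].
rewrite inE => /existsP[j /and3P[j1 j2 /eqP E]].
have : (ord0 : 'I_N.+1) \in [set j; (inord m : 'I_N.+1)] by rewrite -E !inE eqxx.
by rewrite !inE -!val_eqE /= inordK; lia.
Qed.

Lemma disjoint_extend_side_fan S : triangulation_in m S -> [disjoint extend_side S & fan].
Proof.
move=> [Hd _]; apply/disjointP => d; rewrite /extend_side /fan !inE.
move=> /orP[dS|/eqP->] /existsP[j /and3P[_ _ /eqP E]].
  have : (inord m : 'I_N.+1) < m by apply: (diag_in_ltn (Hd _ dS)); rewrite E !inE eqxx orbT.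
  by rewrite inordK; lia.
have : (inord m : 'I_N.+1) \in [set ord0; (inord m.-1 : 'I_N.+1)] by rewrite E !inE eqxx orbT.
by rewrite !inE -!val_eqE /= !inordK; lia.
Qed.

Lemma disjoint_extend_apex_side S T : triangulation_in m S -> triangulation_in m T ->
  [disjoint S & T] -> [disjoint extend_apex S & extend_side T].
Proof.
move=> [HdS _] [HdT _] /disjointP dST; apply/disjointP => d.
rewrite /extend_side /extend_apex !inE => /orP[dS|/eqP->] /orP[dT|/eqP E].
- exact: dST dS dT.
- have := HdS _ dS; rewrite E diag_in_set2 /=; last by rewrite inordK; lia.
  by rewrite inordK; lia.
- have : (inord m : 'I_N.+1) < m by apply: (diag_in_ltn (HdT _ dT)); rewrite !inE eqxx orbT.
  by rewrite inordK; lia.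
- have : (inord m : 'I_N.+1) \in [set ord0; (inord m.-1 : 'I_N.+1)] by rewrite -E !inE eqxx orbT.
  by rewrite !inE -!val_eqE /= !inordK; lia.
Qed.

Lemma disjoint_extend_apex S T : triangulation_in m S -> triangulation_in m T ->
  [disjoint S & T] -> apex S != apex T -> [disjoint extend_apex S & extend_apex T].
Proof.
move=> tS tT /disjointP dST ne.
have := apex_leq m_ge3 tS; have := apex_leq m_ge3 tT.
case: tS => HdS _; case: tT => HdT _ aT aS.
apply/disjointP => d; rewrite /extend_apex !inE => /orP[dS|/eqP->] /orP[dT|/eqP E].
- exact: dST dS dT.
- have : (inord m : 'I_N.+1) < m by apply: (diag_in_ltn (HdS _ dS)); rewrite E !inE eqxx orbT.
  by rewrite inordK; lia.
- have : (inord m : 'I_N.+1) < m by apply: (diag_in_ltn (HdT _ dT)); rewrite !inE eqxx orbT.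
  by rewrite inordK; lia.
- have : (inord (apex S) : 'I_N.+1) \in [set (inord (apex T) : 'I_N.+1); (inord m : 'I_N.+1)].
    by rewrite -E !inE eqxx.
  by rewrite !inE -!val_eqE /= !inordK; lia.
Qed.

End Extension.

Definition apex_separating m k (c : {set {set 'I_N.+1}} -> nat) : Prop :=
  (forall T, triangulation_in m T -> c T < k) /\
  (forall T T', triangulation_in m T -> triangulation_in m T' ->
     [disjoint T & T'] -> apex T != apex T' -> c T != c T').

Section Restriction.

Variables (m k : nat) (c : {set {set 'I_N.+1}} -> nat).
Hypotheses (m_ge3 : 3 <= m) (m_leN : m <= N) (c_sep : apex_separating m.+1 k c).

Let alpha := c (fan m).

Let pick S :=
  if c (extend_apex m S) != alpha then c (extend_apex m S) else c (extend_side m S).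

Lemma pick_neq_fan S : triangulation_in m S -> pick S != alpha.
Proof.
move=> tS; rewrite /pick; case: ifP => // _.
apply: c_sep.2; [exact: triangulation_extend_side | exact: triangulation_fan |
                 exact: disjoint_extend_side_fan |].
by rewrite apex_extend_side // apex_fan //; lia.
Qed.

Lemma pick_ltn S : triangulation_in m S -> pick S < k.
Proof.
move=> tS; rewrite /pick; case: ifP => _; apply: c_sep.1;
  [exact: triangulation_extend_apex | exact: triangulation_extend_side].
Qed.

Lemma extend_apex_separating S T : triangulation_in m S -> triangulation_in m T ->
  [disjoint S & T] -> apex S != apex T -> c (extend_apex m S) != c (extend_apex m T).
Proof.
move=> tS tT dST ne; apply: c_sep.2; try exact: triangulation_extend_apex.
  exact: disjoint_extend_apex.
by rewrite !apex_extend_apex.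
Qed.

Lemma pick_separating S T : triangulation_in m S -> triangulation_in m T ->
  [disjoint S & T] -> apex S != apex T -> pick S != pick T.
Proof.
move=> tS tT dST ne; have aS := apex_leq m_ge3 tS; have aT := apex_leq m_ge3 tT.
rewrite /pick; case: ifP => hS; case: ifP => hT.
- exact: extend_apex_separating.
- apply: c_sep.2; [exact: triangulation_extend_apex | exact: triangulation_extend_side |
                   exact: disjoint_extend_apex_side |].
  by rewrite apex_extend_apex // apex_extend_side //; lia.
- apply: c_sep.2; [exact: triangulation_extend_side | exact: triangulation_extend_apex |
                   by rewrite disjoint_sym; apply: disjoint_extend_apex_side;
                      rewrite // disjoint_sym |].
  by rewrite apex_extend_apex // apex_extend_side //; lia.
- move/negbFE/eqP: hS => hS; move/negbFE/eqP: hT => hT.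
  by have := extend_apex_separating tS tT dST ne; rewrite hS hT eqxx.
Qed.

(* The colours of the extensions of S avoid the colour of the fan; [unbump]
   closes that gap, leaving k-1 colours. *)
Lemma apex_separating_restrict : exists c', apex_separating m k.-1 c'.
Proof.
have alpha_lt : alpha < k by apply: c_sep.1; exact: triangulation_fan.
exists (fun S => unbump alpha (pick S)); split.
  move=> S tS; have := pick_ltn tS; have := pick_neq_fan tS; rewrite /unbump; lia.
move=> S T tS tT dST ne.
apply: contra_neq (pick_separating tS tT dST ne) => /(congr1 (bump alpha)).
by rewrite !unbumpK // inE ?pick_neq_fan.
Qed.

End Restriction.

Lemma apex_separating_lb m k c : 3 <= m -> m <= N.+1 -> apex_separating m k c -> m - 2 <= k.
Proof.
elim: m k c => [//|m IH] k c m3 mN sep.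
case: (ltngtP m 2) => [|m2|m2]; first lia.
  have m_ge3 : 3 <= m by lia.
  have m_leN : m <= N by lia.
  have [c' sep'] := apex_separating_restrict m_ge3 m_leN sep.
  by have := IH _ _ m_ge3 (ltnW mN) sep'; lia.
have t0 : triangulation_in 3 set0 by apply/triangulation_in3.
by have := sep.1 set0; rewrite m2 => /(_ t0); lia.
Qed.

End Polygon.

Theorem theorem1p1 (n : nat) (hn : 3 <= n) :
  kneser_triang_chromatic_number n (n - 2).
Proof.
case: n hn => [//|N] hn; have N_gt0 : 0 < N by lia.
split; first exact: kneser_triang_colorable_apex.
move=> k [f [f_lt f_proper]].
apply: (apex_separating_lb N_gt0 (m := N.+1) (c := f)) => //; split.
  by move=> T /triangulation_in_full; apply: f_lt.
move=> T T' /triangulation_in_full tT /triangulation_in_full tT' disj ne.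
by apply: f_proper => //; apply: contraNneq ne => ->.
Qed.
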